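(* Let $1\le p\ne q<\infty$ and let $T\in B(\ell^p)$ and $S\in B(\ell^q)$ be invertible. Then $T$ and $S$ are equivalent after extension but are not equivalent after one-sided extension.
   Context: $\ell^p=\ell^p(\mathbb N)$ over $\mathbb C$; $B(X,Y)$ denotes bounded linear operators; invertibility means bounded inverse; $X\oplus Y$ is the $\ell^2$-direct sum and $\mathrm{id}_X$ the identity. Operators $T\in B(X)$ and $S\in B(Y)$ are equivalent after extension if there exist Banach spaces $X'$, $Y'$ and invertible $E\in B(Y\oplus Y',X\oplus X')$, $F\in B(X\oplus X',Y\oplus Y')$ with $\begin{bmatrix}T&0\\0&\mathrm{id}_{X'}\end{bmatrix}=E\begin{bmatrix}S&0\\0&\mathrm{id}_{Y'}\end{bmatrix}F$. They are equivalent after one-sided extension if this holds with one of $X'$ or $Y'$ equal to the trivial space $\{0\}$. *)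

From Stdlib Require Import Reals ClassicalEpsilon.
Open Scope R_scope.

Record Cx : Type := mkCx { Re : R; Im : R }.
Definition Cx_mul (a b : Cx) : Cx :=
  mkCx (Re a * Re b - Im a * Im b) (Re a * Im b + Im a * Re b).
Definition Cx_one : Cx := mkCx 1 0.
Definition Cx_mone : Cx := mkCx (-1) 0.
Definition Cx_add (a b : Cx) : Cx := mkCx (Re a + Re b) (Im a + Im b).
Definition Cx_zero : Cx := mkCx 0 0.
Definition Cx_mod (a : Cx) : R := sqrt (Re a * Re a + Im a * Im a).

(** A space is given by a carrier type [V] together
    with the subset [mem] of its elements (this lets us take e.g. l^p as the
    set of p-summable sequences inside [nat -> Cx]), and the operations. *)
Record NSpace : Type := {
  V : Type;
  mem : V -> Prop;
  vzero : V;
  vadd : V -> V -> V;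
  vscal : Cx -> V -> V;
  vnorm : V -> R }.

Arguments mem {_} _.
Arguments vzero {_}.
Arguments vadd {_} _ _.
Arguments vscal {_} _ _.
Arguments vnorm {_} _.

Definition vsub {X : NSpace} (x y : V X) : V X := vadd x (vscal Cx_mone y).

Definition is_banach (X : NSpace) : Prop :=
  mem (@vzero X) /\
  (forall x y : V X, mem x -> mem y -> mem (vadd x y)) /\
  (forall (a : Cx) (x : V X), mem x -> mem (vscal a x)) /\
  (forall x y z : V X, mem x -> mem y -> mem z ->
     vadd x (vadd y z) = vadd (vadd x y) z) /\
  (forall x y : V X, mem x -> mem y -> vadd x y = vadd y x) /\
  (forall x : V X, mem x -> vadd vzero x = x) /\
  (forall x : V X, mem x -> vadd x (vscal Cx_mone x) = vzero) /\
  (forall x : V X, mem x -> vscal Cx_one x = x) /\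
  (forall (a b : Cx) (x : V X), mem x -> vscal (Cx_mul a b) x = vscal a (vscal b x)) /\
  (forall (a : Cx) (x y : V X), mem x -> mem y ->
     vscal a (vadd x y) = vadd (vscal a x) (vscal a y)) /\
  (forall (a b : Cx) (x : V X), mem x ->
     vscal (Cx_add a b) x = vadd (vscal a x) (vscal b x)) /\
  (forall x : V X, mem x -> 0 <= vnorm x) /\
  (forall x : V X, mem x -> vnorm x = 0 -> x = vzero) /\
  (forall (a : Cx) (x : V X), mem x -> vnorm (vscal a x) = Cx_mod a * vnorm x) /\
  (forall x y : V X, mem x -> mem y -> vnorm (vadd x y) <= vnorm x + vnorm y) /\
  (forall u : nat -> V X, (forall n, mem (u n)) ->
     (forall eps, 0 < eps -> exists N, forall m n, (N <= m)%nat -> (N <= n)%nat ->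
        vnorm (vsub (u m) (u n)) < eps) ->
     exists l, mem l /\ forall eps, 0 < eps -> exists N, forall n, (N <= n)%nat ->
        vnorm (vsub (u n) l) < eps).

Record BL (X Y : NSpace) : Type := {
  op :> V X -> V Y;
  op_mem : forall x, mem x -> mem (op x);
  op_add : forall x y, mem x -> mem y -> op (vadd x y) = vadd (op x) (op y);
  op_scal : forall a x, mem x -> op (vscal a x) = vscal a (op x);
  op_bdd : exists M, forall x, mem x -> vnorm (op x) <= M * vnorm x }.

Arguments op {_ _} _ _.

Definition invertible {X Y : NSpace} (E : BL X Y) : Prop :=
  exists G : BL Y X,
    (forall y, mem y -> op E (op G y) = y) /\
    (forall x, mem x -> op G (op E x) = x).

Definition dsum (X Y : NSpace) : NSpace := {|
  V := (V X * V Y)%type;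
  mem := fun z => mem (fst z) /\ mem (snd z);
  vzero := (vzero, vzero);
  vadd := fun z w => (vadd (fst z) (fst w), vadd (snd z) (snd w));
  vscal := fun a z => (vscal a (fst z), vscal a (snd z));
  vnorm := fun z => sqrt (vnorm (fst z) ^ 2 + vnorm (snd z) ^ 2) |}.

Definition triv : NSpace := {|
  V := unit; mem := fun _ => True; vzero := tt;
  vadd := fun _ _ => tt; vscal := fun _ _ => tt; vnorm := fun _ => 0 |}.

Definition rpow (a p : R) : R :=
  match Rle_dec a 0 with left _ => 0 | right _ => Rpower a p end.

Definition lp_summable (p : R) (x : nat -> Cx) : Prop :=
  exists L, infinite_sum (fun n => rpow (Cx_mod (x n)) p) L.

Definition lp_sum (p : R) (x : nat -> Cx) : R :=
  epsilon (inhabits 0) (fun L => infinite_sum (fun n => rpow (Cx_mod (x n)) p) L).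

Definition lp (p : R) : NSpace := {|
  V := nat -> Cx;
  mem := lp_summable p;
  vzero := fun _ => Cx_zero;
  vadd := fun x y n => Cx_add (x n) (y n);
  vscal := fun a x n => Cx_mul a (x n);
  vnorm := fun x => rpow (lp_sum p x) (1 / p) |}.

(* [T (+) id_X' = E (S (+) id_Y') F] on X (+) X' *)
Definition equiv_ext_via {X Y : NSpace} (T : BL X X) (S : BL Y Y)
    (X' Y' : NSpace) : Prop :=
  exists (E : BL (dsum Y Y') (dsum X X')) (F : BL (dsum X X') (dsum Y Y')),
    invertible E /\ invertible F /\
    forall z : V (dsum X X'), mem z ->
      (op T (fst z), snd z) =
      op E (op S (fst (op F z)), snd (op F z)).

Definition equiv_after_extension {X Y : NSpace} (T : BL X X) (S : BL Y Y) : Prop :=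
  exists X' Y' : NSpace, is_banach X' /\ is_banach Y' /\ equiv_ext_via T S X' Y'.

Definition equiv_after_one_sided_extension {X Y : NSpace} (T : BL X X) (S : BL Y Y)
  : Prop :=
  (exists X' : NSpace, is_banach X' /\ equiv_ext_via T S X' triv) \/
  (exists Y' : NSpace, is_banach Y' /\ equiv_ext_via T S triv Y').

(* T (+) id and S (+) id become equivalent once each side is extended by the other space:
   swapping the summands of l^p (+) l^q is invertible, and T, S^-1 act on the two factors.

   For the negative part, a one-sided extension is an isomorphism l^s (+) {0} ~ l^r (+) Z with
   r <> s; compressing its inverse and itself to the first summands gives A : l^r -> l^s with a
   bounded left inverse.  Such an A cannot exist: the images A e_n of the unit vectors are
   coordinatewise bounded, so by pigeonholing two of them, A e_a and A e_b with a < b as late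
   as we like, almost agree on any prescribed finite block of coordinates.  Hence
   x = e_a - e_b has r-mass 2 while A x lives, up to a small error, on a window beyond that
   block.  Summing N such gliding humps on successive windows gives a vector of r-norm of
   order N^(1/r) whose image has s-norm of order N^(1/s), contradicting boundedness of A
   when s < r and of its left inverse when s > r. *)

From Stdlib Require Import Reals Lra Lia ClassicalEpsilon Classical FunctionalExtensionality.
Open Scope R_scope.

Lemma rpow_ge0 a p : 0 <= rpow a p.
Proof. unfold rpow; destruct (Rle_dec a 0); [lra | left; apply exp_pos]. Qed.

Lemma rpow_gt0 a p : 0 < a -> 0 < rpow a p.
Proof. intros; unfold rpow; destruct (Rle_dec a 0); [lra | apply exp_pos]. Qed.

Lemma rpow_Rpower a p : 0 < a -> rpow a p = Rpower a p.
Proof. intros; unfold rpow; destruct (Rle_dec a 0); [lra | reflexivity]. Qed.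

Lemma rpow_0_l p : rpow 0 p = 0.
Proof. unfold rpow; destruct (Rle_dec 0 0); lra. Qed.

Lemma rpow_1_l p : rpow 1 p = 1.
Proof. rewrite rpow_Rpower by lra. unfold Rpower; rewrite ln_1, Rmult_0_r; apply exp_0. Qed.

Lemma rpow_1_r a : 0 <= a -> rpow a 1 = a.
Proof.
  intros Ha; destruct (Req_dec a 0) as [->|]; [apply rpow_0_l|].
  rewrite rpow_Rpower by lra; apply Rpower_1; lra.
Qed.

Lemma rpow_le_compat a b p : 0 <= p -> a <= b -> rpow a p <= rpow b p.
Proof.
  intros Hp Hab; destruct (Rle_dec a 0) as [Ha|Ha].
  - unfold rpow at 1; destruct (Rle_dec a 0); [apply rpow_ge0 | lra].
  - rewrite !rpow_Rpower by lra; apply Rle_Rpower_l; lra.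
Qed.

Lemma rpow_mult_distr a b p : 0 <= a -> 0 <= b -> rpow (a * b) p = rpow a p * rpow b p.
Proof.
  intros Ha Hb.
  destruct (Req_dec a 0) as [->|]; [rewrite Rmult_0_l, rpow_0_l; ring|].
  destruct (Req_dec b 0) as [->|]; [rewrite Rmult_0_r, rpow_0_l; ring|].
  rewrite !rpow_Rpower by (try apply Rmult_lt_0_compat; lra).
  rewrite Rpower_mult_distr; lra.
Qed.

Lemma rpow_rpow a p q : 0 <= a -> rpow (rpow a p) q = rpow a (p * q).
Proof.
  intros Ha; destruct (Req_dec a 0) as [->|]; [rewrite !rpow_0_l; reflexivity|].
  rewrite (rpow_Rpower a p), rpow_Rpower, rpow_Rpower by (try apply exp_pos; lra).
  apply Rpower_mult.
Qed.

Lemma rpow_plus a p q : 0 < a -> rpow a (p + q) = rpow a p * rpow a q.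
Proof. intros; rewrite !rpow_Rpower by assumption; apply Rpower_plus. Qed.

Lemma rpow_rpow_inv a p : 0 < p -> 0 <= a -> rpow (rpow a p) (1 / p) = a.
Proof.
  intros; rewrite rpow_rpow by assumption.
  replace (p * (1 / p)) with 1 by (field; lra); apply rpow_1_r; assumption.
Qed.

Lemma rpow_inv_rpow a p : 0 < p -> 0 <= a -> rpow (rpow a (1 / p)) p = a.
Proof.
  intros; rewrite rpow_rpow by assumption.
  replace (1 / p * p) with 1 by (field; lra); apply rpow_1_r; assumption.
Qed.

Lemma rpow_le_self a p : 1 <= p -> 0 <= a <= 1 -> rpow a p <= a.
Proof.
  intros Hp Ha; destruct (Req_dec a 0) as [->|]; [rewrite rpow_0_l; lra|].
  replace p with (1 + (p - 1)) by ring.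
  rewrite rpow_plus, rpow_1_r by lra.
  pose proof (rpow_le_compat a 1 (p - 1) ltac:(lra) ltac:(lra)).
  rewrite rpow_1_l in *.
  pose proof (rpow_ge0 a (p - 1)); nra.
Qed.

Lemma rpow_ge_1 a p : 0 <= p -> 1 <= a -> 1 <= rpow a p.
Proof. intros; rewrite <- (rpow_1_l p); apply rpow_le_compat; assumption. Qed.

Lemma bernoulli_Rpower t p : 1 <= p -> 0 < t -> 1 + p * (t - 1) <= Rpower t p.
Proof.
  intros Hp Ht.
  set (f := fun x => Rpower x p - p * x).
  set (f' := fun x => p * Rpower x (p - 1) - p).
  assert (Df : forall c, 0 < c -> derivable_pt_lim f c (f' c)).
  { intros c Hc; apply derivable_pt_lim_minus.
    - apply derivable_pt_lim_power; assumption.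
    - replace p with (p * 1) at 2 by ring.
      apply derivable_pt_lim_scal, derivable_pt_lim_id. }
  assert (E1 : forall q, Rpower 1 q = 1) by (intro q; rewrite <- rpow_Rpower by lra; apply rpow_1_l).
  destruct (Rtotal_order t 1) as [Hlt|[->|Hgt]].
  - destruct (MVT_cor2 f f' t 1 Hlt) as [c [Hc1 Hc2]]; [intros c Hc; apply Df; lra|].
    unfold f, f' in Hc1; rewrite E1 in Hc1.
    assert (Hc : Rpower c (p - 1) <= Rpower 1 (p - 1)) by (apply Rle_Rpower_l; lra).
    rewrite E1 in Hc.
    assert (0 <= p * (1 - Rpower c (p - 1)) * (1 - t)) by (apply Rmult_le_pos; nra).
    nra.
  - rewrite E1; lra.
  - destruct (MVT_cor2 f f' 1 t Hgt) as [c [Hc1 Hc2]]; [intros c Hc; apply Df; lra|].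
    unfold f, f' in Hc1; rewrite E1 in Hc1.
    assert (Hc : Rpower 1 (p - 1) <= Rpower c (p - 1)) by (apply Rle_Rpower_l; lra).
    rewrite E1 in Hc.
    assert (0 <= p * (Rpower c (p - 1) - 1) * (t - 1)) by (apply Rmult_le_pos; nra).
    nra.
Qed.

Lemma rpow_tangent_le w m p : 1 <= p -> 0 <= w -> 0 < m ->
  rpow m p + p * rpow m p * (w / m - 1) <= rpow w p.
Proof.
  intros Hp Hw Hm; pose proof (rpow_gt0 m p Hm).
  destruct (Req_dec w 0) as [->|].
  - rewrite rpow_0_l; unfold Rdiv; rewrite Rmult_0_l; nra.
  - assert (Hwm : 0 < w / m) by (apply Rdiv_lt_0_compat; lra).
    pose proof (bernoulli_Rpower (w / m) p Hp Hwm) as B.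
    rewrite <- rpow_Rpower in B by assumption.
    replace w with (m * (w / m)) at 2 by (field; lra).
    rewrite rpow_mult_distr by lra; nra.
Qed.

Lemma rpow_convex l u v p : 1 <= p -> 0 <= l <= 1 -> 0 <= u -> 0 <= v ->
  rpow (l * u + (1 - l) * v) p <= l * rpow u p + (1 - l) * rpow v p.
Proof.
  intros Hp Hl Hu Hv; set (m := l * u + (1 - l) * v).
  pose proof (rpow_ge0 u p); pose proof (rpow_ge0 v p).
  destruct (Req_dec m 0) as [Hm0|Hm0]; [rewrite Hm0, rpow_0_l; nra|].
  assert (Hm : 0 < m) by (unfold m in *; nra).
  pose proof (rpow_tangent_le u m p Hp Hu Hm) as Tu.
  pose proof (rpow_tangent_le v m p Hp Hv Hm) as Tv.
  assert (Hbal : l * (u / m - 1) + (1 - l) * (v / m - 1) = 0) by (unfold m in *; field; lra).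
  set (M := rpow m p) in *.
  assert (l * (M + p * M * (u / m - 1)) <= l * rpow u p) by (apply Rmult_le_compat_l; lra).
  assert ((1 - l) * (M + p * M * (v / m - 1)) <= (1 - l) * rpow v p)
    by (apply Rmult_le_compat_l; lra).
  assert (M = l * (M + p * M * (u / m - 1)) + (1 - l) * (M + p * M * (v / m - 1))).
  { transitivity (M + p * M * (l * (u / m - 1) + (1 - l) * (v / m - 1))); [rewrite Hbal|]; ring. }
  lra.
Qed.

Fixpoint fsum (f : nat -> R) (n : nat) : R :=
  match n with O => 0 | S k => fsum f k + f k end.

Lemma fsum_le f g n : (forall j, (j < n)%nat -> f j <= g j) -> fsum f n <= fsum g n.
Proof.
  induction n as [|n IH]; simpl; intros H; [lra|].
  pose proof (H n ltac:(lia)); pose proof (IH ltac:(intros; apply H; lia)); lra.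
Qed.

Lemma fsum_ext f g n : (forall j, (j < n)%nat -> f j = g j) -> fsum f n = fsum g n.
Proof.
  induction n as [|n IH]; simpl; intros H; [reflexivity|].
  rewrite H, IH by (intros; try apply H; lia); reflexivity.
Qed.

Lemma fsum_ge0 f n : (forall j, 0 <= f j) -> 0 <= fsum f n.
Proof. induction n as [|n IH]; simpl; intros H; [lra|]. pose proof (H n); pose proof (IH H); lra. Qed.

Lemma fsum_plus f g n : fsum (fun j => f j + g j) n = fsum f n + fsum g n.
Proof. induction n as [|n IH]; simpl; [ring|]. rewrite IH; ring. Qed.

Lemma fsum_scal c f n : fsum (fun j => c * f j) n = c * fsum f n.
Proof. induction n as [|n IH]; simpl; [ring|]. rewrite IH; ring. Qed.

Lemma fsum_const a n : fsum (fun _ => a) n = INR n * a.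
Proof. induction n as [|n IH]; simpl fsum; [simpl; ring|]. rewrite IH, S_INR; ring. Qed.

Lemma fsum_le_mono f n m : (forall j, 0 <= f j) -> (n <= m)%nat -> fsum f n <= fsum f m.
Proof. intros H Hnm; induction Hnm as [|m _ IH]; simpl; [lra|]. pose proof (H m); lra. Qed.

Lemma fsum_term_le f n j : (forall j, 0 <= f j) -> (j < n)%nat -> f j <= fsum f n.
Proof.
  intros H Hj; apply Rle_trans with (fsum f (S j)); [|apply fsum_le_mono; assumption].
  simpl; pose proof (fsum_ge0 f j H); lra.
Qed.

Definition fnorm (p : R) (a : nat -> R) (n : nat) : R :=
  rpow (fsum (fun j => rpow (a j) p) n) (1 / p).

Lemma fnorm_ge0 p a n : 0 <= fnorm p a n.
Proof. apply rpow_ge0. Qed.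

Lemma rpow_fnorm p a n : 0 < p -> rpow (fnorm p a n) p = fsum (fun j => rpow (a j) p) n.
Proof.
  intros; apply rpow_inv_rpow; [assumption|].
  apply fsum_ge0; intros; apply rpow_ge0.
Qed.

Lemma fnorm_le p a b n : 0 < p -> (forall j, (j < n)%nat -> 0 <= a j <= b j) ->
  fnorm p a n <= fnorm p b n.
Proof.
  intros Hp H; apply rpow_le_compat; [apply Rlt_le, Rdiv_lt_0_compat; lra|].
  apply fsum_le; intros j Hj; apply rpow_le_compat; [lra | apply H; assumption].
Qed.

Lemma fnorm_ext p a b n : (forall j, (j < n)%nat -> a j = b j) -> fnorm p a n = fnorm p b n.
Proof. intros H; unfold fnorm; f_equal; apply fsum_ext; intros j Hj; rewrite H; auto. Qed.

Lemma fnorm_eq0 p a n : 0 < p -> (forall j, 0 <= a j) -> fnorm p a n = 0 ->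
  forall j, (j < n)%nat -> a j = 0.
Proof.
  intros Hp Ha H j Hj.
  assert (Hs : fsum (fun j => rpow (a j) p) n = 0) by (rewrite <- rpow_fnorm, H by lra; apply rpow_0_l).
  pose proof (fsum_term_le (fun j => rpow (a j) p) n j (fun j => rpow_ge0 _ _) Hj).
  destruct (Ha j) as [Hl|]; [|auto]. pose proof (rpow_gt0 (a j) p Hl). lra.
Qed.

Lemma fsum_rpow_div_fnorm p a n : 0 < p -> (forall j, 0 <= a j) -> 0 < fnorm p a n ->
  fsum (fun j => rpow (a j / fnorm p a n) p) n = 1.
Proof.
  intros Hp Ha Hn; set (al := fnorm p a n) in *.
  assert (Hal : 0 < rpow al p) by (apply rpow_gt0; assumption).
  rewrite (fsum_ext _ (fun j => / rpow al p * rpow (a j) p)).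
  - rewrite fsum_scal; unfold al; rewrite rpow_fnorm by assumption.
    fold al; rewrite <- (rpow_fnorm p a n Hp); fold al; field; lra.
  - intros j _.
    assert (E : rpow (a j) p = rpow (a j / al) p * rpow al p).
    { rewrite <- rpow_mult_distr by (try apply Rmult_le_pos; try apply Ha; try apply Rlt_le, Rinv_0_lt_compat; lra).
      f_equal; field; lra. }
    rewrite E; field; lra.
Qed.

Lemma rpow_add_le_convex a b al be p : 1 <= p -> 0 < al -> 0 < be -> 0 <= a -> 0 <= b ->
  rpow (a + b) p <=
  rpow (al + be) p * (al / (al + be) * rpow (a / al) p + be / (al + be) * rpow (b / be) p).
Proof.
  intros Hp Hal Hbe Ha Hb; set (l := al / (al + be)).
  assert (Hl : 0 <= l <= 1).
  { unfold l; split; [apply Rlt_le, Rdiv_lt_0_compat; lra|].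
    apply Rmult_le_reg_r with (al + be); [lra|]; unfold Rdiv; rewrite Rmult_assoc, Rinv_l; lra. }
  assert (Hua : 0 <= a / al) by (apply Rmult_le_pos; [|apply Rlt_le, Rinv_0_lt_compat]; lra).
  assert (Hub : 0 <= b / be) by (apply Rmult_le_pos; [|apply Rlt_le, Rinv_0_lt_compat]; lra).
  replace (a + b) with ((al + be) * (l * (a / al) + (1 - l) * (b / be))) by (unfold l; field; lra).
  replace (be / (al + be)) with (1 - l) by (unfold l; field; lra).
  rewrite rpow_mult_distr by nra.
  apply Rmult_le_compat_l; [apply rpow_ge0 | apply rpow_convex; assumption].
Qed.

Lemma fnorm_triangle p a b n : 1 <= p -> (forall j, 0 <= a j) -> (forall j, 0 <= b j) ->
  fnorm p (fun j => a j + b j) n <= fnorm p a n + fnorm p b n.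
Proof.
  intros Hp Ha Hb.
  destruct (fnorm_ge0 p a n) as [Hal|Hal0].
  2: { rewrite (fnorm_ext p _ b), <- Hal0 by
         (intros j Hj; rewrite (fnorm_eq0 p a n ltac:(lra) Ha (eq_sym Hal0) j Hj); ring); lra. }
  destruct (fnorm_ge0 p b n) as [Hbe|Hbe0].
  2: { rewrite (fnorm_ext p _ a), <- Hbe0 by
         (intros j Hj; rewrite (fnorm_eq0 p b n ltac:(lra) Hb (eq_sym Hbe0) j Hj); ring); lra. }
  set (al := fnorm p a n) in *; set (be := fnorm p b n) in *; set (K := rpow (al + be) p).
  assert (Hsum : fsum (fun j => rpow (a j + b j) p) n <= K).
  { eapply Rle_trans.
    { apply fsum_le; intros j _; apply (rpow_add_le_convex (a j) (b j) al be p); auto. }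
    rewrite fsum_scal, fsum_plus, !fsum_scal.
    unfold al, be; rewrite !fsum_rpow_div_fnorm by (auto; lra).
    fold al be; right; unfold K; field; lra. }
  unfold fnorm at 1; rewrite <- (rpow_rpow_inv (al + be) p) by lra.
  apply rpow_le_compat; [apply Rlt_le, Rdiv_lt_0_compat; lra | exact Hsum].
Qed.

Lemma Cx_ext a b : Re a = Re b -> Im a = Im b -> a = b.
Proof. destruct a, b; simpl; intros; subst; reflexivity. Qed.

Lemma Cx_add_0l a : Cx_add Cx_zero a = a. Proof. apply Cx_ext; simpl; ring. Qed.
Lemma Cx_add_0r a : Cx_add a Cx_zero = a. Proof. apply Cx_ext; simpl; ring. Qed.
Lemma Cx_mul_0r a : Cx_mul a Cx_zero = Cx_zero. Proof. apply Cx_ext; simpl; ring. Qed.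

Lemma Cx_mod_ge0 a : 0 <= Cx_mod a. Proof. apply sqrt_pos. Qed.

Lemma Cx_mod_triangle a b : Cx_mod (Cx_add a b) <= Cx_mod a + Cx_mod b.
Proof.
  destruct a as [x y], b as [u v]; unfold Cx_mod; simpl.
  pose proof (sqrt_cauchy x y u v) as C; unfold Rsqr in C.
  pose proof (sqrt_pos (x * x + y * y)); pose proof (sqrt_pos (u * u + v * v)).
  apply Rsqr_incr_0_var; [|lra]; unfold Rsqr.
  assert (Hsq : forall a b, 0 <= a * a + b * b) by (intros; nra).
  rewrite (sqrt_sqrt ((x + u) * (x + u) + (y + v) * (y + v))) by apply Hsq.
  pose proof (sqrt_sqrt (x * x + y * y) (Hsq x y)); pose proof (sqrt_sqrt (u * u + v * v) (Hsq u v)).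
  nra.
Qed.

Lemma Cx_mod_mul a b : Cx_mod (Cx_mul a b) = Cx_mod a * Cx_mod b.
Proof.
  destruct a as [x y], b as [u v]; unfold Cx_mod; simpl.
  rewrite <- sqrt_mult by nra; f_equal; ring.
Qed.

Lemma Cx_mod_0 : Cx_mod Cx_zero = 0.
Proof. unfold Cx_mod; simpl; rewrite Rmult_0_l, Rplus_0_l; apply sqrt_0. Qed.

Lemma Cx_mod_1 : Cx_mod Cx_one = 1.
Proof. unfold Cx_mod; simpl; replace (1 * 1 + 0 * 0) with 1 by ring; apply sqrt_1. Qed.

Lemma Cx_mod_m1 : Cx_mod Cx_mone = 1.
Proof. unfold Cx_mod; simpl; replace (-1 * -1 + 0 * 0) with 1 by ring; apply sqrt_1. Qed.

Lemma Cx_mod_eq0 a : Cx_mod a = 0 -> a = Cx_zero.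
Proof.
  destruct a as [x y]; unfold Cx_mod; simpl; intro H.
  apply sqrt_eq_0 in H; [|nra]; unfold Cx_zero; f_equal; nra.
Qed.

Lemma Rabs_Re_le a : Rabs (Re a) <= Cx_mod a.
Proof.
  destruct a as [x y]; unfold Cx_mod; simpl.
  rewrite <- (sqrt_square (Rabs x)) by apply Rabs_pos.
  apply sqrt_le_1_alt; rewrite <- Rabs_mult, Rabs_right; nra.
Qed.

Lemma Rabs_Im_le a : Rabs (Im a) <= Cx_mod a.
Proof.
  destruct a as [x y]; unfold Cx_mod; simpl.
  rewrite <- (sqrt_square (Rabs y)) by apply Rabs_pos.
  apply sqrt_le_1_alt; rewrite <- Rabs_mult, Rabs_right; nra.
Qed.

Lemma Cx_mod_le_Rabs a : Cx_mod a <= Rabs (Re a) + Rabs (Im a).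
Proof.
  destruct a as [x y]; unfold Cx_mod; simpl.
  pose proof (Rabs_pos x); pose proof (Rabs_pos y).
  rewrite <- (sqrt_square (Rabs x + Rabs y)) by lra.
  apply sqrt_le_1_alt.
  assert (x * x = Rabs x * Rabs x) by (rewrite <- Rabs_mult, Rabs_right; nra).
  assert (y * y = Rabs y * Rabs y) by (rewrite <- Rabs_mult, Rabs_right; nra).
  nra.
Qed.

Lemma sum_f_R0_fsum f n : sum_f_R0 f n = fsum f (S n).
Proof. induction n as [|n IH]; simpl; [ring|]. rewrite IH; simpl; ring. Qed.

Lemma infinite_sum_plus f g A B :
  infinite_sum f A -> infinite_sum g B -> infinite_sum (fun j => f j + g j) (A + B).
Proof.
  intros Hf Hg; eapply Un_cv_ext; [intro n; symmetry; apply sum_plus|].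
  apply CV_plus; assumption.
Qed.

Lemma infinite_sum_scal c f A : infinite_sum f A -> infinite_sum (fun j => c * f j) (c * A).
Proof.
  intros Hf; apply Un_cv_ext with (fun n => c * sum_f_R0 f n).
  - intro n; rewrite !sum_f_R0_fsum; symmetry; apply fsum_scal.
  - apply (CV_mult (fun _ => c)); [|assumption].
    intros e He; exists O; intros; unfold Rdist; rewrite Rminus_diag, Rabs_R0; lra.
Qed.

Lemma fsum_le_infinite_sum f L n : (forall j, 0 <= f j) -> infinite_sum f L -> fsum f n <= L.
Proof.
  intros Hf HL; apply Rle_trans with (fsum f (S n)); [apply fsum_le_mono; auto|].
  rewrite <- sum_f_R0_fsum; apply growing_ineq; [|assumption].
  intro k; unfold Un_growing; simpl; pose proof (Hf (S k)); lra.
Qed.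

Lemma infinite_sum_le f L K : infinite_sum f L -> (forall n, fsum f n <= K) -> L <= K.
Proof.
  intros HL HK; destruct (Rle_dec L K) as [|Hn]; [assumption|].
  destruct (HL (L - K)) as [N HN]; [lra|].
  specialize (HN N (le_n N)); rewrite sum_f_R0_fsum in HN.
  pose proof (HK (S N)); unfold Rdist in HN; apply Rabs_def2 in HN; lra.
Qed.

Lemma infinite_sum_of_bounded f K : (forall j, 0 <= f j) -> (forall n, fsum f n <= K) ->
  exists L, infinite_sum f L.
Proof.
  intros Hf HK; destruct (growing_cv (sum_f_R0 f)) as [L HL].
  - intro k; unfold Un_growing; simpl; pose proof (Hf (S k)); lra.
  - exists K; intros x [n ->]; rewrite sum_f_R0_fsum; apply HK.
  - exists L; exact HL.
Qed.

Lemma infinite_sum_tail f L : infinite_sum f L ->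
  forall t, 0 < t -> forall m, exists n, (m <= n)%nat /\ L - fsum f n <= t.
Proof.
  intros HL t Ht m; destruct (HL t Ht) as [N HN].
  exists (S (max N m)); split; [lia|].
  specialize (HN (max N m) ltac:(lia)); rewrite sum_f_R0_fsum in HN.
  unfold Rdist in HN; apply Rabs_def2 in HN; lra.
Qed.

Lemma infinite_sum_finite f n : (forall j, (n <= j)%nat -> f j = 0) -> infinite_sum f (fsum f n).
Proof.
  intros Hf e He; exists n; intros k Hk; rewrite sum_f_R0_fsum.
  assert (Hd : forall d, fsum f (n + d) = fsum f n).
  { induction d as [|d IH]; [rewrite Nat.add_0_r; reflexivity|].
    replace (n + S d)%nat with (S (n + d)) by lia; simpl; rewrite IH, Hf by lia; ring. }
  replace (S k) with (n + (S k - n))%nat by lia; rewrite Hd.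
  unfold Rdist; rewrite Rminus_diag, Rabs_R0; lra.
Qed.

(** * The spaces l^p *)

Definition lp_term (p : R) (x : nat -> Cx) (j : nat) : R := rpow (Cx_mod (x j)) p.
Definition lp_psum (p : R) (x : nat -> Cx) (n : nat) : R := fsum (lp_term p x) n.
Definition lp_norm (p : R) (x : nat -> Cx) : R := rpow (lp_sum p x) (1 / p).
Definition abs_seq (x : nat -> Cx) (j : nat) : R := Cx_mod (x j).

Definition sadd (x y : nat -> Cx) : nat -> Cx := fun n => Cx_add (x n) (y n).
Definition sscal (a : Cx) (x : nat -> Cx) : nat -> Cx := fun n => Cx_mul a (x n).
Definition szero : nat -> Cx := fun _ => Cx_zero.
Definition ssub (x y : nat -> Cx) : nat -> Cx := sadd x (sscal Cx_mone y).

Lemma lp_term_ge0 p x j : 0 <= lp_term p x j. Proof. apply rpow_ge0. Qed.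

Lemma lp_sum_spec p x : lp_summable p x -> infinite_sum (lp_term p x) (lp_sum p x).
Proof. intro H; unfold lp_sum; apply epsilon_spec; exact H. Qed.

Lemma lp_sum_eq p x L : infinite_sum (lp_term p x) L -> lp_sum p x = L.
Proof. intro H; eapply uniqueness_sum; [apply lp_sum_spec; exists L|]; exact H. Qed.

Lemma lp_psum_le_sum p x n : lp_summable p x -> lp_psum p x n <= lp_sum p x.
Proof. intro H; apply fsum_le_infinite_sum; [apply lp_term_ge0 | apply lp_sum_spec; assumption]. Qed.

Lemma lp_sum_ge0 p x : lp_summable p x -> 0 <= lp_sum p x.
Proof. intro H; apply Rle_trans with (lp_psum p x 0); [unfold lp_psum; simpl; lra | apply lp_psum_le_sum; assumption]. Qed.

Lemma lp_sum_le p x K : lp_summable p x -> (forall n, lp_psum p x n <= K) -> lp_sum p x <= K.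
Proof. intros H HK; eapply infinite_sum_le; [apply lp_sum_spec; assumption | exact HK]. Qed.

Lemma lp_summable_of_bounded p x K : (forall n, lp_psum p x n <= K) -> lp_summable p x.
Proof. intros HK; apply (infinite_sum_of_bounded _ K); [apply lp_term_ge0 | exact HK]. Qed.

Lemma lp_sum_rpow_norm p x : 0 < p -> lp_summable p x -> lp_sum p x = rpow (lp_norm p x) p.
Proof. intros; unfold lp_norm; rewrite rpow_inv_rpow; auto; apply lp_sum_ge0; assumption. Qed.

Lemma lp_psum_fnorm p x n : 0 < p -> lp_psum p x n = rpow (fnorm p (abs_seq x) n) p.
Proof. intros; rewrite rpow_fnorm; auto. Qed.

Lemma lp_norm_ge0 p x : 0 <= lp_norm p x. Proof. apply rpow_ge0. Qed.

Lemma fnorm_le_lp_norm p x n : 0 < p -> lp_summable p x -> fnorm p (abs_seq x) n <= lp_norm p x.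
Proof.
  intros Hp H; apply rpow_le_compat; [apply Rlt_le, Rdiv_lt_0_compat; lra|].
  apply lp_psum_le_sum; assumption.
Qed.

Lemma lp_norm_le p x K : 0 < p -> lp_summable p x -> 0 <= K ->
  (forall n, fnorm p (abs_seq x) n <= K) -> lp_norm p x <= K.
Proof.
  intros Hp H HK Hn; unfold lp_norm; rewrite <- (rpow_rpow_inv K p) by assumption.
  apply rpow_le_compat; [apply Rlt_le, Rdiv_lt_0_compat; lra|].
  apply lp_sum_le; [assumption|]; intro n; rewrite lp_psum_fnorm by assumption.
  apply rpow_le_compat; [lra | apply Hn].
Qed.

Lemma lp_summable_of_fnorm_bounded p x K : 0 < p -> (forall n, fnorm p (abs_seq x) n <= K) ->
  lp_summable p x.
Proof.
  intros Hp Hn; apply (lp_summable_of_bounded p x (rpow K p)); intro n.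
  rewrite lp_psum_fnorm by assumption; apply rpow_le_compat; [lra | apply Hn].
Qed.

Lemma Cx_mod_le_lp_norm p x j : 0 < p -> lp_summable p x -> Cx_mod (x j) <= lp_norm p x.
Proof.
  intros Hp H; eapply Rle_trans; [|apply (fnorm_le_lp_norm p x (S j) Hp H)].
  unfold fnorm; rewrite <- (rpow_rpow_inv (Cx_mod (x j)) p) by (auto; apply Cx_mod_ge0).
  apply rpow_le_compat; [apply Rlt_le, Rdiv_lt_0_compat; lra|].
  apply (fsum_term_le (fun j => rpow (abs_seq x j) p)); [intros; apply rpow_ge0 | lia].
Qed.

Lemma lp_minkowski p x y : 1 <= p -> lp_summable p x -> lp_summable p y ->
  lp_summable p (sadd x y) /\ lp_norm p (sadd x y) <= lp_norm p x + lp_norm p y.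
Proof.
  intros Hp Hx Hy.
  assert (B : forall n, fnorm p (abs_seq (sadd x y)) n <= lp_norm p x + lp_norm p y).
  { intro n; eapply Rle_trans.
    { apply (fnorm_le p _ (fun j => abs_seq x j + abs_seq y j)); [lra|].
      intros j _; split; [apply Cx_mod_ge0 | apply Cx_mod_triangle]. }
    eapply Rle_trans; [apply fnorm_triangle; auto; intros; apply Cx_mod_ge0|].
    pose proof (fnorm_le_lp_norm p x n ltac:(lra) Hx).
    pose proof (fnorm_le_lp_norm p y n ltac:(lra) Hy); lra. }
  assert (M : lp_summable p (sadd x y)) by (eapply lp_summable_of_fnorm_bounded; [lra | exact B]).
  split; [exact M|].
  apply lp_norm_le; auto; [lra|].
  pose proof (lp_norm_ge0 p x); pose proof (lp_norm_ge0 p y); lra.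
Qed.

Lemma lp_sum_scal p a x : 0 < p -> lp_summable p x ->
  lp_summable p (sscal a x) /\ lp_sum p (sscal a x) = rpow (Cx_mod a) p * lp_sum p x.
Proof.
  intros Hp Hx.
  pose proof (infinite_sum_scal (rpow (Cx_mod a) p) _ _ (lp_sum_spec p x Hx)) as H.
  replace (fun j => rpow (Cx_mod a) p * lp_term p x j) with (lp_term p (sscal a x)) in H.
  - split; [eexists; exact H | apply lp_sum_eq; exact H].
  - apply functional_extensionality; intro j; unfold lp_term, sscal.
    rewrite Cx_mod_mul, rpow_mult_distr; auto; apply Cx_mod_ge0.
Qed.

Lemma lp_norm_scal p a x : 0 < p -> lp_summable p x -> lp_norm p (sscal a x) = Cx_mod a * lp_norm p x.
Proof.
  intros Hp Hx; destruct (lp_sum_scal p a x Hp Hx) as [_ E]; unfold lp_norm; rewrite E.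
  rewrite rpow_mult_distr, rpow_rpow_inv; auto;
    first [apply Cx_mod_ge0 | apply rpow_ge0 | apply lp_sum_ge0; assumption].
Qed.

Lemma lp_sum_disjoint p x y : lp_summable p x -> lp_summable p y ->
  (forall j, x j = Cx_zero \/ y j = Cx_zero) ->
  lp_sum p (sadd x y) = lp_sum p x + lp_sum p y.
Proof.
  intros Hx Hy Hd; apply lp_sum_eq.
  replace (lp_term p (sadd x y)) with (fun j => lp_term p x j + lp_term p y j).
  - apply infinite_sum_plus; apply lp_sum_spec; assumption.
  - apply functional_extensionality; intro j; unfold lp_term, sadd.
    destruct (Hd j) as [E|E]; rewrite E, ?Cx_add_0l, ?Cx_add_0r, Cx_mod_0, rpow_0_l; ring.
Qed.

Lemma lp_sum_finite_support p x n : (forall j, (n <= j)%nat -> x j = Cx_zero) ->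
  lp_summable p x /\ lp_sum p x = lp_psum p x n.
Proof.
  intros H.
  assert (I : infinite_sum (lp_term p x) (lp_psum p x n)).
  { apply infinite_sum_finite; intros j Hj; unfold lp_term; rewrite H, Cx_mod_0, rpow_0_l; auto. }
  split; [eexists; exact I | apply lp_sum_eq; exact I].
Qed.

Lemma lp_summable_add p x y : 1 <= p -> lp_summable p x -> lp_summable p y -> lp_summable p (sadd x y).
Proof. intros; apply lp_minkowski; assumption. Qed.

Lemma lp_summable_scal p a x : 0 < p -> lp_summable p x -> lp_summable p (sscal a x).
Proof. intros; apply lp_sum_scal; assumption. Qed.

Lemma lp_summable_sub p x y : 1 <= p -> lp_summable p x -> lp_summable p y -> lp_summable p (ssub x y).
Proof. intros; apply lp_summable_add; try apply lp_summable_scal; auto; lra. Qed.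

Lemma lp_summable_zero p : lp_summable p szero.
Proof. apply (lp_sum_finite_support p szero 0); reflexivity. Qed.

Lemma ssub_Re x y j : Re (ssub x y j) = Re (x j) - Re (y j).
Proof. unfold ssub, sadd, sscal; simpl; ring. Qed.

Lemma ssub_Im x y j : Im (ssub x y j) = Im (x j) - Im (y j).
Proof. unfold ssub, sadd, sscal; simpl; ring. Qed.

Lemma fnorm_const_small p J nu : 1 <= p -> 0 < nu -> exists c, 0 < c /\ fnorm p (fun _ => c) J <= nu.
Proof.
  intros Hp Hnu; pose proof (pos_INR J); pose proof (rpow_gt0 nu p Hnu).
  set (c := Rmin 1 (rpow nu p / (INR J + 1))).
  assert (Hc : 0 < c) by (apply Rmin_pos; [lra | apply Rdiv_lt_0_compat; lra]).
  exists c; split; [exact Hc|].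
  unfold fnorm; rewrite fsum_const, <- (rpow_rpow_inv nu p) by lra.
  apply rpow_le_compat; [apply Rlt_le, Rdiv_lt_0_compat; lra|].
  assert (rpow c p <= c) by (apply rpow_le_self; [|split; [|apply Rmin_l]]; lra).
  assert (c <= rpow nu p / (INR J + 1)) by apply Rmin_r.
  apply Rle_trans with ((INR J + 1) * (rpow nu p / (INR J + 1))); [|right; field; lra].
  pose proof (rpow_ge0 c p); nra.
Qed.

Lemma coord_cv_uniform (u : nat -> nat -> Cx) (l : nat -> Cx) :
  (forall j, Un_cv (fun n => Re (u n j)) (Re (l j))) ->
  (forall j, Un_cv (fun n => Im (u n j)) (Im (l j))) ->
  forall d, 0 < d -> forall J, exists K, forall k, (K <= k)%nat -> forall j, (j < J)%nat ->
    Rabs (Re (u k j) - Re (l j)) < d /\ Rabs (Im (u k j) - Im (l j)) < d.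
Proof.
  intros HR HI d Hd J; induction J as [|J [K HK]]; [exists O; intros; lia|].
  destruct (HR J d Hd) as [K1 H1], (HI J d Hd) as [K2 H2].
  exists (max K (max K1 K2)); intros k Hk j Hj.
  destruct (Nat.eq_dec j J) as [->|]; [split; [apply H1 | apply H2]; lia | apply HK; lia].
Qed.

Section LpComplete.
Variables (p : R) (u : nat -> nat -> Cx).
Hypothesis (Hp : 1 <= p) (Hu : forall n, lp_summable p (u n)).
Hypothesis Hcauchy : forall eps, 0 < eps -> exists N, forall m n, (N <= m)%nat -> (N <= n)%nat ->
  lp_norm p (ssub (u m) (u n)) < eps.

Lemma lp_cauchy_coord_limit : exists l : nat -> Cx,
  (forall j, Un_cv (fun n => Re (u n j)) (Re (l j))) /\
  (forall j, Un_cv (fun n => Im (u n j)) (Im (l j))).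
Proof.
  assert (Hcoord : forall j n m, Cx_mod (ssub (u n) (u m) j) <= lp_norm p (ssub (u n) (u m)))
    by (intros; apply Cx_mod_le_lp_norm; [lra | apply lp_summable_sub; auto]).
  assert (CR : forall j, Cauchy_crit (fun n => Re (u n j))).
  { intros j e He; destruct (Hcauchy e He) as [N HN]; exists N; intros n m Hn Hm; unfold Rdist.
    rewrite <- ssub_Re; eapply Rle_lt_trans; [eapply Rle_trans; [apply Rabs_Re_le | apply Hcoord]|].
    apply HN; assumption. }
  assert (CI : forall j, Cauchy_crit (fun n => Im (u n j))).
  { intros j e He; destruct (Hcauchy e He) as [N HN]; exists N; intros n m Hn Hm; unfold Rdist.
    rewrite <- ssub_Im; eapply Rle_lt_trans; [eapply Rle_trans; [apply Rabs_Im_le | apply Hcoord]|].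
    apply HN; assumption. }
  exists (fun j => mkCx (proj1_sig (R_complete _ (CR j))) (proj1_sig (R_complete _ (CI j)))).
  split; intro j; simpl; [destruct (R_complete _ (CR j)) | destruct (R_complete _ (CI j))]; assumption.
Qed.

Variable l : nat -> Cx.
Hypothesis (HlRe : forall j, Un_cv (fun n => Re (u n j)) (Re (l j))).
Hypothesis (HlIm : forall j, Un_cv (fun n => Im (u n j)) (Im (l j))).

Lemma lp_cauchy_fnorm_limit_le e N : (forall m n, (N <= m)%nat -> (N <= n)%nat ->
    lp_norm p (ssub (u m) (u n)) < e) ->
  forall m, (N <= m)%nat -> forall J, fnorm p (abs_seq (ssub (u m) l)) J <= e.
Proof.
  intros HN m Hm J; apply Rle_plus_epsilon; intros nu Hnu.
  destruct (fnorm_const_small p J nu Hp Hnu) as [c [Hc Hcnu]].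
  destruct (coord_cv_uniform u l HlRe HlIm (c / 2) ltac:(lra) J) as [K HK].
  set (k := max K N).
  eapply Rle_trans.
  { apply (fnorm_le p _ (fun j => abs_seq (ssub (u m) (u k)) j + c)); [lra|].
    intros j Hj; split; [apply Cx_mod_ge0|]; unfold abs_seq.
    replace (ssub (u m) l j) with (Cx_add (ssub (u m) (u k) j) (ssub (u k) l j))
      by (apply Cx_ext; unfold ssub, sadd, sscal; simpl; ring).
    eapply Rle_trans; [apply Cx_mod_triangle | apply Rplus_le_compat_l].
    eapply Rle_trans; [apply Cx_mod_le_Rabs|]; rewrite ssub_Re, ssub_Im.
    destruct (HK k ltac:(unfold k; lia) j Hj); lra. }
  eapply Rle_trans; [apply fnorm_triangle; auto; intros; [apply Cx_mod_ge0 | lra]|].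
  apply Rplus_le_compat; [|exact Hcnu].
  eapply Rle_trans; [apply fnorm_le_lp_norm; [lra | apply lp_summable_sub; auto]|].
  left; apply HN; unfold k; lia.
Qed.

End LpComplete.

Lemma lp_complete p : 1 <= p -> forall u : nat -> nat -> Cx, (forall n, lp_summable p (u n)) ->
  (forall eps, 0 < eps -> exists N, forall m n, (N <= m)%nat -> (N <= n)%nat ->
     lp_norm p (ssub (u m) (u n)) < eps) ->
  exists l, lp_summable p l /\ forall eps, 0 < eps -> exists N, forall n, (N <= n)%nat ->
     lp_norm p (ssub (u n) l) < eps.
Proof.
  intros Hp u Hu HC; destruct (lp_cauchy_coord_limit p u Hp Hu HC) as [l [HlRe HlIm]].
  assert (Hlim := lp_cauchy_fnorm_limit_le p u Hp Hu l HlRe HlIm).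
  destruct (HC 1 ltac:(lra)) as [N1 HN1].
  assert (M1 : lp_summable p (ssub (u N1) l))
    by (eapply lp_summable_of_fnorm_bounded; [lra | apply (Hlim 1 N1 HN1 N1); lia]).
  assert (Ml : lp_summable p l).
  { replace l with (ssub (u N1) (ssub (u N1) l)) by
      (apply functional_extensionality; intro j; apply Cx_ext; unfold ssub, sadd, sscal; simpl; ring).
    apply lp_summable_sub; auto. }
  exists l; split; [exact Ml|]; intros e He.
  destruct (HC (e / 2) ltac:(lra)) as [N HN]; exists N; intros n Hn.
  assert (lp_norm p (ssub (u n) l) <= e / 2)
    by (apply lp_norm_le; [lra | apply lp_summable_sub; auto | lra | apply (Hlim _ N HN n Hn)]).
  lra.
Qed.

Lemma lp_is_banach p : 1 <= p -> is_banach (lp p).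
Proof.
  intros Hp; assert (Hp0 : 0 < p) by lra; unfold is_banach; simpl.
  repeat split;
    try (intros; apply functional_extensionality; intro j; apply Cx_ext; simpl; ring).
  - apply lp_summable_zero.
  - intros; apply lp_summable_add; assumption.
  - intros; apply lp_summable_scal; assumption.
  - intros; apply lp_norm_ge0.
  - intros x Hx H0; apply functional_extensionality; intro j; apply Cx_mod_eq0.
    pose proof (Cx_mod_le_lp_norm p x j Hp0 Hx); pose proof (Cx_mod_ge0 (x j)).
    change (rpow (lp_sum p x) (1 / p)) with (lp_norm p x) in H0; lra.
  - intros a x Hx; apply (lp_norm_scal p a x); assumption.
  - intros x y Hx Hy; apply (lp_minkowski p x y); assumption.
  - intros u Hu HC; apply (lp_complete p Hp u Hu HC).
Qed.

(** * Equivalence after two-sided extension *)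

Definition norm_nonneg (X : NSpace) : Prop := forall x : V X, mem x -> 0 <= vnorm x.

Lemma banach_norm_nonneg X : is_banach X -> norm_nonneg X.
Proof. intros (_ & _ & _ & _ & _ & _ & _ & _ & _ & _ & _ & H & _); exact H. Qed.

Lemma dsum_norm_nonneg X Y : norm_nonneg (dsum X Y).
Proof. intros z _; apply sqrt_pos. Qed.

Lemma op_bdd_nonneg {X Y} (f : BL X Y) : norm_nonneg X ->
  exists M, 0 <= M /\ forall x, mem x -> vnorm (f x) <= M * vnorm x.
Proof.
  intros HX; destruct (op_bdd _ _ f) as [M HM]; exists (Rabs M); split; [apply Rabs_pos|].
  intros x Hx; eapply Rle_trans; [apply HM; assumption|].
  apply Rmult_le_compat_r; [apply HX; assumption | apply RRle_abs].
Qed.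

Definition id_op (X : NSpace) : BL X X.
Proof. refine {| op := fun x => x |}; auto; exists 1; intros; lra. Defined.

Section Swap.
Context {X1 X2 Y1 Y2 : NSpace}.
Hypotheses (hX1 : norm_nonneg X1) (hX2 : norm_nonneg X2) (hY1 : norm_nonneg Y1) (hY2 : norm_nonneg Y2).
Variables (f : BL X2 Y1) (g : BL X1 Y2).

Definition swap_fun (z : V (dsum X1 X2)) : V (dsum Y1 Y2) := (f (snd z), g (fst z)).

Lemma swap_fun_bdd : exists M, forall z, mem z -> vnorm (swap_fun z) <= M * vnorm z.
Proof.
  destruct (op_bdd_nonneg f hX2) as [Mf [Hf1 Hf2]], (op_bdd_nonneg g hX1) as [Mg [Hg1 Hg2]].
  exists (Mf + Mg); intros [u v] [Hu Hv]; simpl in *.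
  pose proof (Hf2 v Hv); pose proof (Hg2 u Hu); pose proof (hX1 u Hu); pose proof (hX2 v Hv).
  pose proof (hY1 _ (op_mem _ _ f v Hv)); pose proof (hY2 _ (op_mem _ _ g u Hu)).
  set (a := vnorm (f v)) in *; set (b := vnorm (g u)) in *.
  assert (a ^ 2 + b ^ 2 <= ((Mf + Mg) * (Mf + Mg)) * (vnorm u ^ 2 + vnorm v ^ 2)).
  { assert (a <= (Mf + Mg) * vnorm v) by nra; assert (b <= (Mf + Mg) * vnorm u) by nra; nra. }
  rewrite <- (sqrt_square (Mf + Mg)), <- sqrt_mult by nra.
  apply sqrt_le_1_alt; lra.
Qed.

Definition swap : BL (dsum X1 X2) (dsum Y1 Y2).
Proof.
  refine {| op := swap_fun; op_bdd := swap_fun_bdd |}.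
  - intros z [H1 H2]; split; apply op_mem; assumption.
  - intros z w [H1 H2] [H3 H4]; unfold swap_fun; simpl; rewrite !op_add; auto.
  - intros a z [H1 H2]; unfold swap_fun; simpl; rewrite !op_scal; auto.
Defined.

End Swap.

Lemma swap_invertible {X1 X2 Y1 Y2 : NSpace} h1 h2 h3 h4
  (f : BL X2 Y1) (g : BL X1 Y2) (f' : BL Y1 X2) (g' : BL Y2 X1) :
  (forall y, mem y -> f (f' y) = y) -> (forall x, mem x -> f' (f x) = x) ->
  (forall y, mem y -> g (g' y) = y) -> (forall x, mem x -> g' (g x) = x) ->
  invertible (@swap X1 X2 Y1 Y2 h1 h2 h3 h4 f g).
Proof.
  intros ff' f'f gg' g'g; exists (@swap Y1 Y2 X1 X2 h3 h4 h1 h2 g' f').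
  split; intros [a b] [Ha Hb]; simpl in *; unfold swap_fun; simpl; f_equal; auto.
Qed.

(* [T (+) id_Y = E (S (+) id_X) F] with [E (y, x) = (T x, S^-1 y)] and [F (x, y) = (y, x)]. *)
Lemma invertible_equiv_after_extension {X Y : NSpace} (hX : is_banach X) (hY : is_banach Y)
  (T : BL X X) (S : BL Y Y) : invertible T -> invertible S -> equiv_after_extension T S.
Proof.
  intros [Ti [TTi TiT]] [Si [SSi SiS]].
  pose proof (banach_norm_nonneg X hX) as nX; pose proof (banach_norm_nonneg Y hY) as nY.
  exists Y, X; split; [exact hY|]; split; [exact hX|].
  exists (@swap Y X X Y nY nX nX nY T Si), (@swap X Y Y X nX nY nY nX (id_op Y) (id_op X)).
  split; [apply (swap_invertible _ _ _ _ T Si Ti S); assumption|].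
  split; [apply (swap_invertible _ _ _ _ (id_op Y) (id_op X) (id_op Y) (id_op X)); reflexivity|].
  intros [x y] [Hx Hy]; simpl in *; unfold swap_fun; simpl; rewrite SiS; auto.
Qed.

Definition inf_often (P : nat -> Prop) : Prop := forall m, exists n, (m <= n)%nat /\ P n.

Lemma inf_often_close_subset (f : nat -> R) e : 0 < e -> forall K lo (P : nat -> Prop),
  inf_often P -> (forall n, P n -> lo <= f n <= lo + INR K * e) ->
  exists Q : nat -> Prop, (forall n, Q n -> P n) /\ inf_often Q /\
    forall a b, Q a -> Q b -> Rabs (f a - f b) <= e.
Proof.
  intros He K; induction K as [|K IH]; intros lo P HP Hb.
  - exists P; split; [auto|]; split; [exact HP|].
    intros a b Ha Hb'; pose proof (Hb a Ha); pose proof (Hb b Hb'); simpl in *; apply Rabs_le; lra.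
  - destruct (classic (inf_often (fun n => P n /\ f n <= lo + e))) as [HI|HN].
    + exists (fun n => P n /\ f n <= lo + e); split; [tauto|]; split; [exact HI|].
      intros a b [Ha1 Ha2] [Hb1 Hb2]; pose proof (Hb a Ha1); pose proof (Hb b Hb1); apply Rabs_le; lra.
    + apply not_all_ex_not in HN; destruct HN as [m Hm].
      assert (HI : inf_often (fun n => P n /\ lo + e < f n)).
      { intro m'; destruct (HP (max m m')) as [n [Hn1 Hn2]]; exists n; split; [lia|]; split; [exact Hn2|].
        destruct (Rlt_dec (lo + e) (f n)) as [|Hf]; [assumption|].
        exfalso; apply Hm; exists n; split; [lia|]; split; [assumption | lra]. }
      destruct (IH (lo + e) _ HI) as [Q [HQ1 [HQ2 HQ3]]].
      { intros n [Hn1 Hn2]; pose proof (Hb n Hn1); rewrite S_INR in *; lra. }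
      exists Q; split; [intros n Hn; apply HQ1; assumption|]; split; assumption.
Qed.

Lemma inf_often_bounded_close (f : nat -> R) e M (P : nat -> Prop) : 0 < e -> inf_often P ->
  (forall n, P n -> Rabs (f n) <= M) ->
  exists Q : nat -> Prop, (forall n, Q n -> P n) /\ inf_often Q /\
    forall a b, Q a -> Q b -> Rabs (f a - f b) <= e.
Proof.
  intros He HP Hb; destruct (INR_archimed e (2 * M) He) as [K HK].
  apply (inf_often_close_subset f e He K (- M) P HP).
  intros n Hn; specialize (Hb n Hn); pose proof (Rle_abs (f n)); pose proof (Rle_abs (- f n));
  rewrite Rabs_Ropp in *; lra.
Qed.

Lemma inf_often_coords_close (c : nat -> nat -> Cx) M e : 0 < e -> (forall n j, Cx_mod (c n j) <= M) ->
  forall J (P : nat -> Prop), inf_often P ->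
  exists Q : nat -> Prop, (forall n, Q n -> P n) /\ inf_often Q /\
    forall a b j, Q a -> Q b -> (j < J)%nat ->
      Rabs (Re (c a j) - Re (c b j)) <= e /\ Rabs (Im (c a j) - Im (c b j)) <= e.
Proof.
  intros He HM J; induction J as [|J IH]; intros P HP.
  - exists P; split; [auto|]; split; [exact HP | intros; lia].
  - destruct (IH P HP) as [Q1 [H11 [H12 H13]]].
    destruct (inf_often_bounded_close (fun n => Re (c n J)) e M Q1 He H12) as [Q2 [H21 [H22 H23]]].
    { intros n _; eapply Rle_trans; [apply Rabs_Re_le | apply HM]. }
    destruct (inf_often_bounded_close (fun n => Im (c n J)) e M Q2 He H22) as [Q3 [H31 [H32 H33]]].
    { intros n _; eapply Rle_trans; [apply Rabs_Im_le | apply HM]. }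
    exists Q3; split; [intros; apply H11, H21, H31; assumption|]; split; [exact H32|].
    intros a b j Ha Hb Hj; destruct (Nat.eq_dec j J) as [->|].
    + split; [apply H23; apply H31 | apply H33]; assumption.
    + apply H13; [apply H21, H31 | apply H21, H31 | lia]; assumption.
Qed.

Lemma bounded_coords_close_pair (c : nat -> nat -> Cx) M e : 0 < e -> (forall n j, Cx_mod (c n j) <= M) ->
  forall J L, exists a b, (L <= a)%nat /\ (a < b)%nat /\
    forall j, (j < J)%nat -> Cx_mod (ssub (c a) (c b) j) <= 2 * e.
Proof.
  intros He HM J L.
  destruct (inf_often_coords_close c M e He HM J (fun _ => True)) as [Q [_ [HQ1 HQ2]]].
  { intro m; exists m; split; auto. }
  destruct (HQ1 L) as [a [Ha1 Ha2]], (HQ1 (S a)) as [b [Hb1 Hb2]].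
  exists a, b; split; [exact Ha1|]; split; [lia|]; intros j Hj.
  eapply Rle_trans; [apply Cx_mod_le_Rabs|]; rewrite ssub_Re, ssub_Im.
  destruct (HQ2 a b j Ha2 Hb2 Hj); lra.
Qed.

Definition restrict (P : nat -> bool) (y : nat -> Cx) : nat -> Cx :=
  fun j => if P j then y j else Cx_zero.

Lemma lp_summable_restrict p P y : lp_summable p y -> lp_summable p (restrict P y).
Proof.
  intros Hy; apply (lp_summable_of_bounded p _ (lp_sum p y)); intro n.
  eapply Rle_trans; [|apply (lp_psum_le_sum p y n Hy)].
  apply fsum_le; intros j _; unfold lp_term, restrict; destruct (P j); [lra|].
  rewrite Cx_mod_0, rpow_0_l; apply rpow_ge0.
Qed.

Lemma restrict_restrict P Q y : restrict P (restrict Q y) = restrict (fun j => andb (P j) (Q j)) y.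
Proof. apply functional_extensionality; intro j; unfold restrict; destruct (P j), (Q j); reflexivity. Qed.

Lemma restrict_ext P Q y : (forall j, P j = Q j) -> restrict P y = restrict Q y.
Proof. intros H; apply functional_extensionality; intro j; unfold restrict; rewrite H; reflexivity. Qed.

Lemma sadd_restrict P y : sadd (restrict P y) (restrict (fun j => negb (P j)) y) = y.
Proof.
  apply functional_extensionality; intro j; unfold sadd, restrict.
  destruct (P j); simpl; [apply Cx_add_0r | apply Cx_add_0l].
Qed.

Lemma lp_sum_restrict_split p P y : lp_summable p y ->
  lp_sum p y = lp_sum p (restrict P y) + lp_sum p (restrict (fun j => negb (P j)) y).
Proof.
  intros Hy; rewrite <- (sadd_restrict P y) at 1.
  apply lp_sum_disjoint; try apply lp_summable_restrict; try assumption.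
  intro j; unfold restrict; destruct (P j); simpl; auto.
Qed.

Lemma lp_sum_restrict_lt p y n : lp_sum p (restrict (fun j => Nat.ltb j n) y) = lp_psum p y n.
Proof.
  destruct (lp_sum_finite_support p (restrict (fun j => Nat.ltb j n) y) n) as [_ ->].
  - intros j Hj; unfold restrict; destruct (Nat.ltb_spec j n); [lia | reflexivity].
  - apply fsum_ext; intros j Hj; unfold lp_term, restrict; destruct (Nat.ltb_spec j n); [reflexivity | lia].
Qed.

Definition window (L L' : nat) (j : nat) : bool := andb (Nat.leb L j) (Nat.ltb j L').

Lemma lp_window_split p y L M tau : lp_summable p y -> 0 < tau -> exists L', (M < L')%nat /\
  lp_sum p (restrict (fun j => negb (window L L' j)) y) <= lp_psum p y L + tau.
Proof.
  intros Hy Ht.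
  destruct (infinite_sum_tail _ _ (lp_sum_spec p y Hy) tau Ht (S (max L M))) as [L' [HL' Htail]].
  exists L'; split; [lia|].
  set (w := restrict (fun j => negb (window L L' j)) y).
  assert (Hw : lp_summable p w) by (apply lp_summable_restrict; assumption).
  rewrite (lp_sum_restrict_split p (fun j => Nat.ltb j L) w Hw); unfold w; rewrite !restrict_restrict.
  rewrite (restrict_ext _ (fun j => Nat.ltb j L)), lp_sum_restrict_lt.
  2: { intro j; unfold window; destruct (Nat.ltb_spec j L), (Nat.leb_spec L j); simpl; lia || reflexivity. }
  rewrite (restrict_ext _ (fun j => negb (Nat.ltb j L'))).
  2: { intro j; unfold window;
       destruct (Nat.ltb_spec j L), (Nat.leb_spec L j), (Nat.ltb_spec j L'); simpl; lia || reflexivity. }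
  rewrite (lp_sum_restrict_split p (fun j => Nat.ltb j L') y Hy), lp_sum_restrict_lt in Htail.
  unfold lp_psum in Htail; unfold lp_psum; lra.
Qed.

(** * Gliding humps *)

Definition unit_seq (n : nat) : nat -> Cx := fun j => if Nat.eq_dec j n then Cx_one else Cx_zero.

Lemma lp_sum_unit_seq p n : lp_summable p (unit_seq n) /\ lp_sum p (unit_seq n) = 1.
Proof.
  destruct (lp_sum_finite_support p (unit_seq n) (S n)) as [H1 ->].
  { intros j Hj; unfold unit_seq; destruct (Nat.eq_dec j n); [lia | reflexivity]. }
  split; [exact H1|]; unfold lp_psum; simpl.
  rewrite (fsum_ext _ (fun _ => 0)), fsum_const; unfold lp_term, unit_seq.
  - destruct (Nat.eq_dec n n); [|lia]; rewrite Cx_mod_1, rpow_1_l; ring.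
  - intros j Hj; destruct (Nat.eq_dec j n); [lia|]; rewrite Cx_mod_0, rpow_0_l; reflexivity.
Qed.

Lemma lp_sum_unit_diff p a b : 1 <= p -> a <> b ->
  lp_summable p (ssub (unit_seq a) (unit_seq b)) /\ lp_sum p (ssub (unit_seq a) (unit_seq b)) = 2.
Proof.
  intros Hp Hab; destruct (lp_sum_unit_seq p a) as [Ha1 Ha2], (lp_sum_unit_seq p b) as [Hb1 Hb2].
  destruct (lp_sum_scal p Cx_mone (unit_seq b) ltac:(lra) Hb1) as [Hmb Smb].
  split; [apply lp_summable_sub; assumption|].
  unfold ssub; rewrite lp_sum_disjoint; try assumption.
  - rewrite Ha2, Smb, Hb2, Cx_mod_m1, rpow_1_l; ring.
  - intro j; unfold sscal, unit_seq; destruct (Nat.eq_dec j a), (Nat.eq_dec j b);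
      subst; try lia; rewrite ?Cx_mul_0r; auto.
Qed.

Lemma lp_psum_le_of_Cx_mod_le p y n d : 0 < p -> 0 <= d ->
  (forall j, (j < n)%nat -> Cx_mod (y j) <= rpow d (1 / p)) -> lp_psum p y n <= INR n * d.
Proof.
  intros Hp Hd H; unfold lp_psum; rewrite <- fsum_const; apply fsum_le; intros j Hj.
  unfold lp_term; rewrite <- (rpow_inv_rpow d p) by assumption.
  apply rpow_le_compat; [lra | apply H; assumption].
Qed.

Lemma lp_norm_sadd_ge p z w : 1 <= p -> lp_summable p z -> lp_summable p w ->
  lp_norm p z - lp_norm p w <= lp_norm p (sadd z w).
Proof.
  intros Hp Hz Hw.
  replace z with (sadd (sadd z w) (sscal Cx_mone w)) at 1
    by (apply functional_extensionality; intro j; apply Cx_ext; unfold sadd, sscal; simpl; ring).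
  pose proof (proj2 (lp_minkowski p (sadd z w) (sscal Cx_mone w) Hp
    (lp_summable_add p z w Hp Hz Hw) (lp_summable_scal p Cx_mone w ltac:(lra) Hw))).
  rewrite lp_norm_scal, Cx_mod_m1 in * by (assumption || lra); lra.
Qed.

Lemma rpow_INR_dominates al be a K b : 0 <= be -> be < al -> 0 < a -> 0 <= K -> 0 <= b ->
  exists N : nat, (1 <= N)%nat /\ K * rpow (INR N) be + b < a * rpow (INR N) al.
Proof.
  intros Hbe Hal Ha HK Hb; set (g := al - be); set (D := (K + b + 1) / a).
  assert (Hg : 0 < g) by (unfold g; lra).
  assert (HD : 0 <= D / g) by (apply Rmult_le_pos; [apply Rmult_le_pos|]; try (left; apply Rinv_0_lt_compat); lra).
  destruct (INR_unbounded (exp (D / g))) as [N HN].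
  pose proof (exp_ineq1_le (D / g)).
  assert (HN1 : 1 <= INR N) by lra.
  exists N; split; [destruct N; [simpl in HN1; lra | lia]|].
  assert (E : rpow (INR N) al = rpow (INR N) be * rpow (INR N) g)
    by (rewrite <- rpow_plus by lra; f_equal; unfold g; ring).
  assert (G : D <= rpow (INR N) g).
  { rewrite rpow_Rpower by lra; unfold Rpower; eapply Rle_trans; [|apply exp_ineq1_le].
    assert (D / g <= ln (INR N)) by (rewrite <- (ln_exp (D / g)); left; apply ln_increasing; [apply exp_pos | lra]).
    replace D with (g * (D / g)) by (field; lra); nra. }
  pose proof (rpow_ge_1 (INR N) be Hbe HN1).
  assert (a * D = K + b + 1) by (unfold D; field; lra).
  assert (a * (rpow (INR N) be * D) <= a * (rpow (INR N) be * rpow (INR N) g))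
    by (apply Rmult_le_compat_l; [|apply Rmult_le_compat_l]; lra).
  rewrite E; nra.
Qed.

Section LpLeftInvertible.
Variables (r s : R) (A : BL (lp r) (lp s)) (B : BL (lp s) (lp r)) (MA MB : R).
Hypotheses (hr : 1 <= r) (hs : 1 <= s) (MApos : 0 < MA) (MBpos : 0 < MB).
Hypothesis BA : forall x, lp_summable r x -> B (A x) = x.
Hypothesis Abd : forall x, lp_summable r x -> lp_norm s (A x) <= MA * lp_norm r x.
Hypothesis Bbd : forall y, lp_summable s y -> lp_norm r (B y) <= MB * lp_norm s y.

Lemma lp_op_summable x : lp_summable r x -> lp_summable s (A x).
Proof. apply (op_mem _ _ A). Qed.

Lemma lp_op_sadd x y : lp_summable r x -> lp_summable r y -> A (sadd x y) = sadd (A x) (A y).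
Proof. apply (op_add _ _ A). Qed.

Lemma lp_op_ssub x y : lp_summable r x -> lp_summable r y -> A (ssub x y) = ssub (A x) (A y).
Proof.
  intros Hx Hy; unfold ssub; rewrite lp_op_sadd; [|assumption | apply lp_summable_scal; [lra | assumption]].
  f_equal; apply (op_scal _ _ A); assumption.
Qed.

Lemma lp_op_szero : A szero = szero.
Proof.
  replace szero with (sscal Cx_zero szero) at 1
    by (apply functional_extensionality; intro; apply Cx_ext; simpl; ring).
  rewrite (op_scal _ _ A) by apply lp_summable_zero.
  apply functional_extensionality; intro; apply Cx_ext; simpl; ring.
Qed.

Let rho := rpow 2 (1 / r).
Let lo := rpow (rho / MB) s.
Let hi := rpow (MA * rho) s.

Lemma hump_norm_gt0 : 0 < rho. Proof. apply rpow_gt0; lra. Qed.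
Lemma hump_image_mass_gt0 : 0 < lo. Proof. apply rpow_gt0, Rdiv_lt_0_compat; [apply hump_norm_gt0 | assumption]. Qed.

Lemma lp_sum_A_bounds x : lp_summable r x -> lp_sum r x = 2 -> lo <= lp_sum s (A x) <= hi.
Proof.
  intros Hx Sx; pose proof hump_norm_gt0.
  assert (Nx : lp_norm r x = rho) by (unfold lp_norm; rewrite Sx; reflexivity).
  assert (Hup : lp_norm s (A x) <= MA * rho) by (rewrite <- Nx; apply Abd; assumption).
  assert (Hdown : rho <= MB * lp_norm s (A x)) by (rewrite <- Nx, <- (BA x Hx) at 1; apply Bbd, lp_op_summable; assumption).
  rewrite lp_sum_rpow_norm by (lra || apply lp_op_summable; assumption).
  split; apply rpow_le_compat; try lra.
  apply Rmult_le_reg_l with MB; [assumption|]; unfold Rdiv; rewrite <- Rmult_assoc, (Rmult_comm MB), Rmult_assoc, Rinv_r; lra.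
Qed.

Lemma A_unit_diff_small_head tau L : 0 < tau -> exists a b, (L <= a)%nat /\ (a < b)%nat /\
  lp_psum s (A (ssub (unit_seq a) (unit_seq b))) L <= tau.
Proof.
  intros Ht; pose proof (pos_INR L).
  assert (Hc : forall n j, Cx_mod (A (unit_seq n) j) <= MA).
  { intros n j; destruct (lp_sum_unit_seq r n) as [E1 E2].
    eapply Rle_trans; [apply (Cx_mod_le_lp_norm s); [lra | apply lp_op_summable; exact E1]|].
    eapply Rle_trans; [apply Abd; exact E1|]; unfold lp_norm; rewrite E2, rpow_1_l; lra. }
  set (d := tau / (INR L + 1)).
  assert (Hd : 0 < d) by (apply Rdiv_lt_0_compat; lra).
  destruct (bounded_coords_close_pair (fun n => A (unit_seq n)) MA (rpow d (1 / s) / 2)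
              ltac:(pose proof (rpow_gt0 d (1 / s) Hd); lra) Hc L L) as [a [b [Ha [Hab Hclose]]]].
  exists a, b; split; [exact Ha|]; split; [exact Hab|].
  destruct (lp_sum_unit_seq r a) as [Ea _], (lp_sum_unit_seq r b) as [Eb _].
  rewrite lp_op_ssub by assumption.
  eapply Rle_trans; [apply (lp_psum_le_of_Cx_mod_le s _ L d); [lra | lra |]|].
  - intros j Hj; specialize (Hclose j Hj); simpl in Hclose; lra.
  - apply Rle_trans with ((INR L + 1) * d); [nra | right; unfold d; field; lra].
Qed.


Lemma gliding_hump_block tau L : 0 < tau -> exists x z w L', (L < L')%nat /\
  lp_summable r x /\ lp_summable s z /\ lp_summable s w /\
  (forall j, ((j < L)%nat \/ (L' <= j)%nat) -> x j = Cx_zero /\ z j = Cx_zero) /\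
  lp_sum r x = 2 /\ A x = sadd z w /\ lp_sum s w <= 2 * tau /\ lo - 2 * tau <= lp_sum s z <= hi.
Proof.
  intros Ht; destruct (A_unit_diff_small_head tau L Ht) as [a [b [Ha [Hab Hhead]]]].
  set (x := ssub (unit_seq a) (unit_seq b)) in Hhead.
  destruct (lp_sum_unit_diff r a b hr ltac:(lia)) as [Mx Sx]; fold x in Mx, Sx.
  assert (My : lp_summable s (A x)) by (apply lp_op_summable; assumption).
  destruct (lp_window_split s (A x) L b tau My Ht) as [L' [HbL' Hw]].
  set (z := restrict (window L L') (A x)); set (w := restrict (fun j => negb (window L L' j)) (A x)) in Hw |- *.
  assert (Mz : lp_summable s z) by (apply lp_summable_restrict; assumption).
  assert (Mw : lp_summable s w) by (apply lp_summable_restrict; assumption).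
  pose proof (lp_sum_restrict_split s (window L L') (A x) My) as Hsplit; fold z w in Hsplit.
  pose proof (lp_sum_A_bounds x Mx Sx); pose proof (lp_sum_ge0 s w Mw).
  exists x, z, w, L'; split; [lia|]; split; [exact Mx|]; split; [exact Mz|]; split; [exact Mw|].
  split.
  { intros j Hj; split.
    - unfold x, ssub, sadd, sscal, unit_seq.
      destruct (Nat.eq_dec j a), (Nat.eq_dec j b); try lia; rewrite Cx_mul_0r; apply Cx_add_0l.
    - unfold z, restrict, window; destruct (Nat.leb_spec L j), (Nat.ltb_spec j L'); simpl; lia || reflexivity. }
  split; [exact Sx|]; split; [symmetry; apply sadd_restrict|].
  split; lra.
Qed.

Lemma gliding_hump_sum tau N : 0 < tau -> exists X Z W L,
  lp_summable r X /\ lp_summable s Z /\ lp_summable s W /\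
  (forall j, (L <= j)%nat -> X j = Cx_zero /\ Z j = Cx_zero) /\
  lp_sum r X = 2 * INR N /\ A X = sadd Z W /\
  INR N * (lo - 2 * tau) <= lp_sum s Z <= INR N * hi /\
  lp_norm s W <= INR N * rpow (2 * tau) (1 / s).
Proof.
  intros Ht; induction N as [|N IH].
  - destruct (lp_sum_finite_support r szero O) as [M1 E1]; [reflexivity|].
    destruct (lp_sum_finite_support s szero O) as [M2 E2]; [reflexivity|].
    exists szero, szero, szero, O; unfold lp_norm; rewrite E1, E2, lp_op_szero; unfold lp_psum; simpl.
    rewrite rpow_0_l; repeat split; auto; try lra.
    apply functional_extensionality; intro; symmetry; apply Cx_add_0l.
  - destruct IH as [X [Z [W [L [MX [MZ [MW [HV [SX [EA [[SZ1 SZ2] NW]]]]]]]]]]].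
    destruct (gliding_hump_block tau L Ht) as [x [z [w [L' [HLL [Mx [Mz [Mw [Hv [Sx [Ea [Sw [Sz1 Sz2]]]]]]]]]]]]].
    assert (Hdisj : forall j, (X j = Cx_zero /\ Z j = Cx_zero) \/ (x j = Cx_zero /\ z j = Cx_zero)).
    { intro j; destruct (Nat.lt_ge_cases j L); [right; apply Hv | left; apply HV]; auto. }
    assert (Nw : lp_norm s w <= rpow (2 * tau) (1 / s))
      by (apply rpow_le_compat; [apply Rlt_le, Rdiv_lt_0_compat|]; lra).
    exists (sadd X x), (sadd Z z), (sadd W w), L'.
    split; [apply lp_summable_add; assumption|].
    split; [apply lp_summable_add; assumption|].
    split; [apply lp_summable_add; assumption|].
    split.
    { intros j Hj; unfold sadd; destruct (HV j ltac:(lia)) as [-> ->], (Hv j ltac:(lia)) as [-> ->].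
      split; apply Cx_add_0l. }
    assert (Hd1 : forall j, X j = Cx_zero \/ x j = Cx_zero) by (intro j; destruct (Hdisj j); tauto).
    assert (Hd2 : forall j, Z j = Cx_zero \/ z j = Cx_zero) by (intro j; destruct (Hdisj j); tauto).
    rewrite !lp_sum_disjoint, SX, Sx, S_INR by assumption.
    split; [ring|]; split.
    { rewrite lp_op_sadd, EA, Ea by assumption.
      apply functional_extensionality; intro j; apply Cx_ext; unfold sadd; simpl; ring. }
    split; [lra|].
    eapply Rle_trans; [apply lp_minkowski; assumption | lra].
Qed.

Lemma gliding_hump_norms N : (1 <= N)%nat -> exists X Z W,
  lp_summable r X /\ lp_summable s Z /\ lp_summable s W /\
  lp_norm r X = rho * rpow (INR N) (1 / r) /\ A X = sadd Z W /\
  rpow (lo / 2) (1 / s) * rpow (INR N) (1 / s) <= lp_norm s Z <=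
    rpow hi (1 / s) * rpow (INR N) (1 / s) /\
  lp_norm s W <= 1.
Proof.
  intros HN; assert (HN' : 1 <= INR N) by (apply (le_INR 1); assumption).
  pose proof hump_image_mass_gt0; pose proof (rpow_gt0 (/ INR N) s ltac:(apply Rinv_0_lt_compat; lra)).
  set (tau := Rmin (lo / 4) (rpow (/ INR N) s / 2)).
  assert (Ht : 0 < tau) by (apply Rmin_pos; lra).
  assert (tau <= lo / 4) by apply Rmin_l; assert (tau <= rpow (/ INR N) s / 2) by apply Rmin_r.
  assert (Hs : 0 <= 1 / s) by (apply Rlt_le, Rdiv_lt_0_compat; lra).
  destruct (gliding_hump_sum tau N Ht) as [X [Z [W [L [MX [MZ [MW [_ [SX [EA [[SZ1 SZ2] NW]]]]]]]]]]].
  exists X, Z, W; split; [exact MX|]; split; [exact MZ|]; split; [exact MW|].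
  split; [unfold lp_norm, rho; rewrite SX, rpow_mult_distr by lra; reflexivity|].
  split; [exact EA|]; unfold lp_norm.
  rewrite <- (rpow_mult_distr (lo / 2)), <- (rpow_mult_distr hi) by (lra || apply rpow_ge0).
  split; [split; apply rpow_le_compat; nra|].
  eapply Rle_trans; [exact NW|].
  assert (rpow (2 * tau) (1 / s) <= / INR N).
  { rewrite <- (rpow_rpow_inv (/ INR N) s) by (try (left; apply Rinv_0_lt_compat); lra).
    apply rpow_le_compat; lra. }
  apply Rle_trans with (INR N * / INR N); [apply Rmult_le_compat_l; lra | right; field; lra].
Qed.

Lemma lp_left_invertible_exponent_eq : r = s.
Proof.
  pose proof hump_norm_gt0; pose proof hump_image_mass_gt0.
  assert (Hhi : 0 <= rpow hi (1 / s)) by apply rpow_ge0.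
  assert (Hinv : forall a b, 0 < a -> a < b -> 1 / b < 1 / a)
    by (intros; unfold Rdiv; rewrite !Rmult_1_l; apply Rinv_lt_contravar; nra).
  destruct (Rtotal_order s r) as [Hsr|[Hsr|Hrs]]; [exfalso| symmetry; exact Hsr | exfalso].
  - destruct (rpow_INR_dominates (1 / s) (1 / r) (rpow (lo / 2) (1 / s)) (MA * rho) 1) as [N [HN HN2]];
      try (apply Rlt_le, Rdiv_lt_0_compat); try apply Hinv; try apply rpow_gt0; try nra; try lra.
    destruct (gliding_hump_norms N HN) as [X [Z [W [MX [MZ [MW [NX [EA [[NZ1 NZ2] NW]]]]]]]]].
    pose proof (lp_norm_sadd_ge s Z W hs MZ MW); rewrite <- EA in *.
    pose proof (Abd X MX); rewrite NX in *; lra.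
  - destruct (rpow_INR_dominates (1 / r) (1 / s) rho (MB * rpow hi (1 / s)) MB) as [N [HN HN2]];
      try (apply Rlt_le, Rdiv_lt_0_compat); try apply Hinv; try nra; try lra.
    destruct (gliding_hump_norms N HN) as [X [Z [W [MX [MZ [MW [NX [EA [[NZ1 NZ2] NW]]]]]]]]].
    assert (lp_norm r X <= MB * lp_norm s (A X)) by (rewrite <- (BA X MX) at 1; apply Bbd, lp_op_summable; exact MX).
    assert (lp_norm s (A X) <= lp_norm s Z + lp_norm s W) by (rewrite EA; apply lp_minkowski; assumption).
    rewrite NX in *; nra.
Qed.

End LpLeftInvertible.

Theorem lp_left_invertible_eq r s (A : BL (lp r) (lp s)) (B : BL (lp s) (lp r)) :
  1 <= r -> 1 <= s -> (forall x, lp_summable r x -> B (A x) = x) -> r = s.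
Proof.
  intros hr hs BA.
  destruct (op_bdd_nonneg A (fun x _ => lp_norm_ge0 r x)) as [MA [HMA HA]].
  destruct (op_bdd_nonneg B (fun y _ => lp_norm_ge0 s y)) as [MB [HMB HB]].
  apply (lp_left_invertible_exponent_eq r s A B (MA + 1) (MB + 1)); try lra; try assumption.
  - intros x Hx; eapply Rle_trans; [apply HA; exact Hx|].
    apply Rmult_le_compat_r; [apply lp_norm_ge0 | lra].
  - intros y Hy; eapply Rle_trans; [apply HB; exact Hy|].
    apply Rmult_le_compat_r; [apply lp_norm_ge0 | lra].
Qed.

(** * No equivalence after one-sided extension *)

Definition null_vector {X : NSpace} (w : V X) : Prop :=
  mem w /\ vnorm w = 0 /\ vadd w w = w /\ forall a, vscal a w = w.

(* [0 * vzero] rather than [vzero]: the axioms give its properties without a cancellation law. *)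
Lemma banach_null_vector X : is_banach X -> exists w : V X, null_vector w.
Proof.
  intros (Z0 & _ & Zscal & _ & _ & _ & _ & _ & Zmul & _ & Zdist & _ & _ & Znsc & _).
  exists (vscal Cx_zero vzero); split; [apply Zscal; exact Z0|].
  split; [rewrite Znsc, Cx_mod_0 by exact Z0; ring|]; split.
  - rewrite <- Zdist by exact Z0; f_equal; apply Cx_ext; simpl; ring.
  - intro a; rewrite <- Zmul by exact Z0; f_equal; apply Cx_ext; simpl; ring.
Qed.

Lemma dsum_norm_fst {X Y : NSpace} (z : V (dsum X Y)) : 0 <= vnorm (fst z) -> vnorm (fst z) <= vnorm z.
Proof.
  intros H; simpl; rewrite <- (sqrt_pow2 (vnorm (fst z))) at 1 by assumption.
  apply sqrt_le_1_alt; pose proof (pow2_ge_0 (vnorm (snd z))); lra.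
Qed.

Lemma dsum_norm_null {X Y : NSpace} (x : V X) (w : V Y) : vnorm w = 0 -> 0 <= vnorm x ->
  @vnorm (dsum X Y) (x, w) = vnorm x.
Proof.
  intros Hw Hx; change (sqrt (vnorm x ^ 2 + vnorm w ^ 2) = vnorm x).
  rewrite Hw, pow_i, Rplus_0_r by lia; apply sqrt_pow2; assumption.
Qed.

Lemma dsum_triv_eta {X : NSpace} (z : V (dsum X triv)) : @pair (V X) (V triv) (fst z) tt = z.
Proof. destruct z as [x []]; reflexivity. Qed.

Section Compress.
Context {X1 X2 Y1 Y2 : NSpace}.
Variables (G : BL (dsum X1 X2) (dsum Y1 Y2)) (w : V X2).
Hypotheses (hw : null_vector w) (hX1 : norm_nonneg X1) (hY1 : norm_nonneg Y1).

Definition compress_fun (x : V X1) : V Y1 := fst (G (x, w)).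

Lemma compress_fun_bdd : exists M, forall x, mem x -> vnorm (compress_fun x) <= M * vnorm x.
Proof.
  pose proof hw as (Mw & Nw & _ & _).
  destruct (op_bdd_nonneg G (dsum_norm_nonneg X1 X2)) as [M [HM0 HM]]; exists M; intros x Hx.
  assert (Hm : mem (G (x, w))) by (apply op_mem; split; assumption).
  eapply Rle_trans; [apply dsum_norm_fst, hY1, Hm|].
  rewrite <- (dsum_norm_null x w Nw (hX1 x Hx)); apply HM; split; assumption.
Qed.

Lemma compress_fun_mem x : mem x -> mem (compress_fun x).
Proof. intros Hx; apply (op_mem _ _ G (x, w)); split; [exact Hx | apply hw]. Qed.

Lemma compress_fun_add x y : mem x -> mem y -> compress_fun (vadd x y) = vadd (compress_fun x) (compress_fun y).
Proof.
  pose proof hw as (Mw & _ & Aw & _); intros Hx Hy; unfold compress_fun.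
  replace (vadd x y, w) with (@vadd (dsum X1 X2) (x, w) (y, w)) by (simpl; rewrite Aw; reflexivity).
  rewrite op_add by (split; assumption); reflexivity.
Qed.

Lemma compress_fun_scal a x : mem x -> compress_fun (vscal a x) = vscal a (compress_fun x).
Proof.
  pose proof hw as (Mw & _ & _ & Sw); intros Hx; unfold compress_fun.
  replace (vscal a x, w) with (@vscal (dsum X1 X2) a (x, w)) by (simpl; rewrite Sw; reflexivity).
  rewrite op_scal by (split; assumption); reflexivity.
Qed.

Definition compress : BL X1 Y1 :=
  {| op := compress_fun; op_mem := compress_fun_mem; op_add := compress_fun_add;
     op_scal := compress_fun_scal; op_bdd := compress_fun_bdd |}.

End Compress.

Lemma lp_iso_dsum_exponent_eq r s (Z : NSpace) : 1 <= r -> 1 <= s -> is_banach Z ->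
  forall F : BL (dsum (lp r) triv) (dsum (lp s) Z), invertible F -> r = s.
Proof.
  intros hr hs hZ F [G [FG GF]]; destruct (banach_null_vector Z hZ) as [w hw].
  assert (htt : @null_vector triv tt) by (repeat split; reflexivity).
  set (A := compress G w hw (fun x _ => lp_norm_ge0 s x) (fun x _ => lp_norm_ge0 r x)).
  set (B := compress F tt htt (fun x _ => lp_norm_ge0 r x) (fun x _ => lp_norm_ge0 s x)).
  symmetry; apply (lp_left_invertible_eq s r A B hs hr).
  intros y Hy; unfold A, B; simpl; unfold compress_fun.
  pose proof hw as (Mw & _).
  rewrite (dsum_triv_eta (G (@pair (V (lp s)) (V Z) y w))), FG by (split; assumption); reflexivity.
Qed.

Lemma not_equiv_after_one_sided_extension p q (T : BL (lp p) (lp p)) (S : BL (lp q) (lp q)) :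
  1 <= p -> 1 <= q -> p <> q -> ~ equiv_after_one_sided_extension T S.
Proof.
  intros hp hq hpq [[X' [hX [E [F [_ [[G [FG GF]] _]]]]]] | [Y' [hY [E [F [_ [HF _]]]]]]].
  - apply hpq, eq_sym, (lp_iso_dsum_exponent_eq q p X' hq hp hX G); exists F; split; assumption.
  - apply hpq, (lp_iso_dsum_exponent_eq p q Y' hp hq hY F HF).
Qed.

Theorem corollary4p4 (p q : R) (hp : 1 <= p) (hq : 1 <= q) (hpq : p <> q)
  (T : BL (lp p) (lp p)) (S : BL (lp q) (lp q))
  (hT : invertible T) (hS : invertible S) :
  equiv_after_extension T S /\ ~ equiv_after_one_sided_extension T S.
Proof.
  split.
  - apply invertible_equiv_after_extension; try apply lp_is_banach; assumption.
  - apply not_equiv_after_one_sided_extension; assumption.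
Qed.
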